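(* Let $S$ be a monoid. Any two trivial left $S$-acts, each of cardinality greater than one, are geometrically equivalent (in the variety of all left $S$-acts).
   Context: A left $S$-act is a nonempty set with an action $S\times A\to A$ satisfying $1a=a$, $(st)a=s(ta)$; homomorphisms preserve the action. An $S$-act $A$ is trivial if $sa=a$ for all $s\in S$, $a\in A$. For a nonempty finite set $X$, $F_X=\coprod_{x\in X}S_x$ is the free $S$-act on $X$. For an $S$-act $G$ and a relation $T\subseteq F_X\times F_X$, $T'_G=\{\mu:F_X\to G \text{ homomorphism}: T\subseteq\ker\mu\}$ and $T''_G=\bigcap_{\mu\in T'_G}\ker\mu$ (empty intersection $=F_X\times F_X$). $S$-acts $G_1,G_2$ are geometrically equivalent iff $T''_{G_1}=T''_{G_2}$ for all nonempty finite $X$ and all $T\subseteq F_X\times F_X$. *)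

From HB Require Import structures.
From mathcomp Require Import ssreflect ssrfun ssrbool eqtype choice fintype.
From mathcomp Require Import monoid.

Set Implicit Arguments.
Unset Strict Implicit.
Unset Printing Implicit Defensive.

Local Open Scope group_scope.

Record lact (S : monoidType) := LAct {
  acar :> Type;
  aop : S -> acar -> acar;
  aop1 : forall a, aop 1 a = a;
  aopM : forall s t a, aop (s * t) a = aop s (aop t a);
  acar_nonempty : inhabited acar
}.

Arguments aop {S} _ _ _.

Definition is_hom (S : monoidType) (A B : lact S) (f : A -> B) : Prop :=
  forall (s : S) (a : A), f (aop A s a) = aop B s (f a).

(* The free S-act F_X = coprod_{x in X} S_x : elements are pairs (s, x),
   with action t (s, x) = (t s, x). *)
Definition free_aop (S : monoidType) (X : Type) (t : S) (p : S * X) : S * X :=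
  (t * p.1, p.2).

Lemma free_aop1 (S : monoidType) (X : Type) (p : S * X) : free_aop 1 p = p.
Proof. by case: p => s x; rewrite /free_aop /= mul1g. Qed.

Lemma free_aopM (S : monoidType) (X : Type) (s t : S) (p : S * X) :
  free_aop (s * t) p = free_aop s (free_aop t p).
Proof. by case: p => u x; rewrite /free_aop /= mulgA. Qed.

Definition free_act (S : monoidType) (X : finType) (x0 : X) : lact S :=
  @LAct S (S * X)%type (@free_aop S X) (@free_aop1 S X) (@free_aopM S X)
    (inhabits (1, x0)).

Definition kerm (A B : Type) (f : A -> B) (a b : A) : Prop := f a = f b.

(* T''_G = intersection of ker mu over homomorphisms mu : F_X -> G with
   T contained in ker mu (empty intersection = F_X x F_X). *)
Definition rad_closure (S : monoidType) (X : finType) (x0 : X) (G : lact S)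
    (T : free_act S x0 -> free_act S x0 -> Prop) (a b : free_act S x0) : Prop :=
  forall mu : free_act S x0 -> G, is_hom mu ->
    (forall u v, T u v -> kerm mu u v) -> kerm mu a b.

Definition geom_equiv (S : monoidType) (G1 G2 : lact S) : Prop :=
  forall (X : finType) (x0 : X) (T : free_act S x0 -> free_act S x0 -> Prop)
         (a b : free_act S x0),
    rad_closure G1 T a b <-> rad_closure G2 T a b.

Definition trivial_act (S : monoidType) (A : lact S) : Prop :=
  forall (s : S) (a : A), aop A s a = a.

Definition card_gt1 (T : Type) : Prop := exists a b : T, a <> b.

From mathcomp Require Import ssreflect ssrfun ssrbool eqtype choice fintype.
From mathcomp Require Import monoid.
From Stdlib Require Import Classical ClassicalEpsilon.

(* Any map between trivial acts is a homomorphism. So if mu2 : F_X -> G2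
   kills T but separates a from b, then composing it with the map G2 -> G1
   sending mu2 b to c and everything else to d <> c yields a homomorphism
   into G1 that still kills T and separates a from b; by symmetry the two
   closures agree. *)

Section TrivialActs.

Variable S : monoidType.

Lemma trivial_act_comp_hom (A B C : lact S) (f : A -> B) (g : B -> C) :
  trivial_act B -> trivial_act C -> is_hom f -> is_hom (g \o f).
Proof. by move=> trivB trivC homf s a; rewrite /= homf trivB trivC. Qed.

Lemma rad_closure_trivial_sub (G1 G2 : lact S) :
  trivial_act G1 -> trivial_act G2 -> card_gt1 G1 ->
  forall (X : finType) (x0 : X) T a b,
    @rad_closure S X x0 G1 T a b -> @rad_closure S X x0 G2 T a b.
Proof.
move=> triv1 triv2 [c [d neq_cd]] X x0 T a b closed1 mu2 hom2 T_ker2.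
apply: NNPP => neq_ab.
pose sep (y : G2) : G1 := if excluded_middle_informative (y = mu2 b) then c else d.
have hom1 : is_hom (sep \o mu2) := @trivial_act_comp_hom _ _ _ mu2 sep triv2 triv1 hom2.
have T_ker1 : forall u v, T u v -> kerm (sep \o mu2) u v.
  by move=> u v Tuv; rewrite /kerm /= (T_ker2 u v Tuv).
have := closed1 _ hom1 T_ker1; rewrite /kerm /= /sep.
by do 2![case: excluded_middle_informative => //] => _ _ /esym.
Qed.

End TrivialActs.

Theorem corollary3p8 (S : monoidType) (G1 G2 : lact S) :
  trivial_act G1 -> trivial_act G2 ->
  card_gt1 G1 -> card_gt1 G2 ->
  geom_equiv G1 G2.
Proof.
move=> triv1 triv2 big1 big2 X x0 T a b.
split; exact: rad_closure_trivial_sub.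
Qed.
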